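(* Suppose that a connected graph $H$ contains the star $K_{1,4}$ as a subgraph but does not contain any subgraph isomorphic to $S_{4,4}$. Then $H$ contains a vertex of degree more than $(v(H)/2)^{1/7}$.
   Context: Graphs are finite simple graphs; $v(H)$ is the number of vertices of $H$. The sparkler graph $S_{4,4}$ is obtained from the star $K_{1,3}$ and the path $P_4$ on 4 vertices by adding an edge between an end vertex of $P_4$ and the central vertex of $K_{1,3}$. *)

From mathcomp Require Import all_boot all_order.
Set Implicit Arguments. Unset Strict Implicit. Unset Printing Implicit Defensive.

Definition simple_graph (T : finType) (e : rel T) : Prop :=
  symmetric e /\ irreflexive e.

Definition connected_graph (T : finType) (e : rel T) : Prop :=
  0 < #|T| /\ forall x y : T, connect e x y.

Definition nverts (T : finType) := #|T|.

Definition deg (T : finType) (e : rel T) (x : T) : nat := #|[set y | e x y]|.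

Definition contains_subgraph (F : finType) (f : rel F) (T : finType) (e : rel T) : Prop :=
  exists phi : F -> T, injective phi /\ forall x y, f x y -> e (phi x) (phi y).

Definition rel_of_edges (n : nat) (E : seq (nat * nat)) : rel 'I_n :=
  fun i j => ((val i, val j) \in E) || ((val j, val i) \in E).

Definition K14 : rel 'I_5 := @rel_of_edges 5 [:: (0,1); (0,2); (0,3); (0,4)].

(* sparkler S_{4,4}: star K_{1,3} with center 0 and leaves 1,2,3; path P_4 = 4-5-6-7;
   extra edge between the end vertex 4 of the path and the center 0. *)
Definition S44 : rel 'I_8 :=
  @rel_of_edges 8 [:: (0,1); (0,2); (0,3); (4,5); (5,6); (6,7); (0,4)].

From mathcomp Require Import all_boot all_order.
From mathcomp Require Import zify.

Set Implicit Arguments.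
Unset Strict Implicit.
Unset Printing Implicit Defensive.

(* Let v be the centre of a copy of K_{1,4}. If some vertex were at distance 4
   from v, a shortest path v p1 p2 p3 p4 together with three neighbours of v
   other than p1 would form an S_{4,4}: those neighbours are at distance 1 from
   v, while p2, p3, p4 are at distance 2, 3, 4. Hence every vertex lies in the
   ball of radius 3 around v, which has at most (D+1)^3 < 2 D^7 vertices, where
   D >= 4 is the maximum degree. *)

Section Balls.
Variables (T : finType) (e : rel T).

Definition cnbhd (S : {set T}) : {set T} :=
  \bigcup_(x in S) (x |: [set y | e x y]).

Definition ball (v : T) (n : nat) : {set T} := iter n cnbhd [set v].

Lemma in_cnbhd (S : {set T}) y : (y \in cnbhd S) = [exists x in S, (y == x) || e x y].
Proof.
apply/bigcupP/existsP => [[x xS]|[x /andP[xS yx]]].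
  by rewrite !inE => yx; exists x; rewrite xS.
by exists x; rewrite ?inE.
Qed.

Lemma subset_cnbhd (S : {set T}) : S \subset cnbhd S.
Proof. by apply/subsetP => x xS; rewrite in_cnbhd; apply/existsP; exists x; rewrite xS eqxx. Qed.

Lemma cnbhd_edge (S : {set T}) x y : x \in S -> e x y -> y \in cnbhd S.
Proof. by move=> xS exy; rewrite in_cnbhd; apply/existsP; exists x; rewrite xS exy orbT. Qed.

Lemma cnbhd_pred (S : {set T}) y : y \in cnbhd S -> y \notin S -> exists2 x, x \in S & e x y.
Proof.
rewrite in_cnbhd => /existsP[x /andP[xS /orP[/eqP yx|exy]]] yS; last by exists x.
by rewrite yx xS in yS.
Qed.

Lemma card_cnbhd_le (S : {set T}) D : (forall x, deg e x <= D) -> #|cnbhd S| <= #|S| * D.+1.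
Proof.
move=> degD; rewrite /cnbhd -sum_nat_const.
elim/big_rec2: _ => [|x n A _ IH]; first by rewrite cards0.
rewrite (leq_trans (leq_card_setU _ _).1) // leq_add // cardsU1.
by have := degD x; rewrite /deg; case: (_ \notin _) => /=; lia.
Qed.

Variable v : T.

Lemma ball_sub n : {subset ball v n <= ball v n.+1}.
Proof. exact/subsetP/subset_cnbhd. Qed.

Lemma card_ball_le D n : (forall x, deg e x <= D) -> #|ball v n| <= D.+1 ^ n.
Proof.
move=> degD; elim: n => [|n IH]; first by rewrite cards1.
by rewrite /= expnSr (leq_trans (card_cnbhd_le _ degD)) // leq_mul2r IH orbT.
Qed.

Lemma ball_edge_out n z w : e z w -> w \notin ball v n.+1 -> z \notin ball v n.
Proof. by move=> ezw; apply: contra => /cnbhd_edge; apply. Qed.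

Lemma uniq_rcons_layer n s y :
  uniq s -> {subset s <= ball v n} -> y \in ball v n.+1 -> y \notin ball v n ->
  uniq (rcons s y) /\ {subset rcons s y <= ball v n.+1}.
Proof.
move=> s_uniq s_ball y_in y_out; split.
  by rewrite rcons_uniq s_uniq andbT; apply: contra y_out => /s_ball.
by move=> x; rewrite mem_rcons inE => /orP[/eqP -> //|/s_ball/ball_sub].
Qed.

End Balls.

Lemma three_in_set (T : finType) (A : {set T}) :
  3 <= #|A| -> exists a b c, [/\ a \in A, b \in A, c \in A & uniq [:: a; b; c]].
Proof.
rewrite cardE; have := enum_uniq (mem A); have := mem_enum (mem A).
case: (enum A) => [|a [|b [|c s]]] // memA /= uniq_s _.
exists a, b, c; rewrite -!memA !inE !eqxx !orbT; split=> //=.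
by move: uniq_s; rewrite /= !inE !negb_or => /and4P[/and3P[-> -> _] /andP[-> _] _ _].
Qed.

Lemma K14_center (T : finType) (e : rel T) :
  contains_subgraph K14 e -> exists v, 4 <= deg e v.
Proof.
move=> [psi [psi_inj psi_e]]; exists (psi ord0).
have card4 : #|[set psi i | i in [set~ (ord0 : 'I_5)]]| = 4.
  by rewrite card_imset // cardsC1 card_ord.
rewrite -[X in X <= _]card4; apply/subset_leq_card/subsetP => _ /imsetP[i + ->].
rewrite !inE; case: i => [[|[|[|[|[|i]]]]] Hi] // _; exact: psi_e.
Qed.

Section Sparkler.
Variables (T : finType) (e : rel T).
Hypotheses (e_sym : symmetric e) (e_irr : irreflexive e).

Lemma S44_of_path (v a b c p1 p2 p3 p4 : T) :
  uniq [:: v; a; b; c; p1; p2; p3; p4] ->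
  e v a -> e v b -> e v c -> e v p1 -> e p1 p2 -> e p2 p3 -> e p3 p4 ->
  contains_subgraph S44 e.
Proof.
move=> s_uniq *; exists (fun i : 'I_8 => nth v [:: v; a; b; c; p1; p2; p3; p4] i).
split.
  by move=> i j /eqP; rewrite nth_uniq // => /eqP/val_inj.
move=> [x Hx] [y Hy].
do 8?[case: x Hx => [|x] Hx //]; do 8?[case: y Hy => [|y] Hy //];
by rewrite /S44 /rel_of_edges /= => _; rewrite // e_sym.
Qed.

Lemma ball3_closed v z w :
  4 <= deg e v -> ~ contains_subgraph S44 e ->
  z \in ball e v 3 -> e z w -> w \in ball e v 3.
Proof.
move=> degv noS44 z3 ezw; apply/negPn/negP => w3.
have z2 := ball_edge_out ezw w3.
have [p2 p2_2 ep2] := cnbhd_pred z3 z2.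
have p2_1 := ball_edge_out ep2 z2.
have [p1 p1_1 ep1] := cnbhd_pred p2_2 p2_1.
have p1_0 := ball_edge_out ep1 p2_1.
have [_ /set1P -> ev1] := cnbhd_pred p1_1 p1_0.
have nb_v x : e v x -> x \in ball e v 1.
  by move=> evx; apply: cnbhd_edge evx; rewrite set11.
have [|a [b [c [/setD1P[a1 va] /setD1P[b1 vb] /setD1P[c1 vc] abc]]]] :=
  @three_in_set _ ([set x | e v x] :\ p1).
  by move: degv; rewrite /deg (cardsD1 p1) inE ev1; lia.
rewrite !inE in va vb vc.
have vx x : e v x -> v != x by apply: contraTneq => <-; rewrite e_irr.
have s_uniq : uniq [:: v; a; b; c; p1].
  move: abc; rewrite /= !inE !negb_or (vx a) // (vx b) // (vx c) // (vx p1) //.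
  by rewrite a1 b1 c1 => /and3P[/andP[-> ->] -> _].
have s_ball : {subset [:: v; a; b; c; p1] <= ball e v 1}.
  move=> x; rewrite !inE => /or4P[/eqP->|/eqP->|/eqP->|/orP[]/eqP->];
  by [apply/ball_sub/set11 | apply: nb_v].
have [u2 s2] := uniq_rcons_layer s_uniq s_ball p2_2 p2_1.
have [u3 s3] := uniq_rcons_layer u2 s2 z3 z2.
have [u4 _] := uniq_rcons_layer u3 s3 (cnbhd_edge z3 ezw) w3.
exact: noS44 (S44_of_path u4 _ _ _ ev1 ep1 ep2 ezw).
Qed.

End Sparkler.

Lemma pow3_lt_2pow7 D : 4 <= D -> D.+1 ^ 3 < 2 * D ^ 7.
Proof.
move=> D4; have : D.+1 ^ 3 <= (2 * D) ^ 3 by rewrite leq_exp2r //; lia.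
move/leq_ltn_trans; apply; rewrite expnMn (_ : 7 = 3 + 4) // expnD.
have : 4 ^ 4 <= D ^ 4 by rewrite leq_exp2r.
have : 0 < D ^ 3 by rewrite expn_gt0; lia.
set X := D ^ 3; set Y := D ^ 4; nia.
Qed.

Theorem lemma3 (T : finType) (e : rel T) :
  simple_graph e -> connected_graph e ->
  contains_subgraph K14 e -> ~ contains_subgraph S44 e ->
  exists x : T, nverts T < 2 * deg e x ^ 7.
Proof.
move=> [e_sym e_irr] [_ conn] /K14_center[v degv] noS44.
have [m _ max_m] := @arg_maxnP _ v predT (deg e) erefl.
have degD x : deg e x <= deg e m by exact: max_m.
have ball3T : ball e v 3 = setT.
  apply/setP => y; rewrite inE.
  have closed3 : closed e (mem (ball e v 3)).
    apply: intro_closed (sym_connect_sym e_sym) _ _ => z w ezw z3.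
    exact: ball3_closed ezw.
  rewrite -(closed_connect closed3 (conn v y)).
  by do 3!apply: ball_sub; rewrite set11.
exists m; rewrite /nverts -cardsT -ball3T.
apply: leq_ltn_trans (card_ball_le v 3 degD) (pow3_lt_2pow7 _).
exact: leq_trans degv (degD v).
Qed.
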